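(* Let $(M,J)$ be an almost complex manifold (not necessarily integrable, not necessarily compact), and let $\phi^k:H^k_J(M)\to H^k_{dR}(M)$ be the natural map. Then $M$ satisfies the $\mathrm d\mathcal L_J$-lemma in degree $k$, i.e. $$(\operatorname{im}\mathcal L_J)^k\cap(\ker\mathrm d)^k=(\operatorname{im}\mathrm d\mathcal L_J)^k,$$ if and only if $\phi^k$ is injective and $\phi^{k-1}$ is surjective.
   Context: For a vector-valued $k$-form $K=K^je_j$ on $M$, $\iota_K\alpha=K^j\wedge(\iota_{e_j}\alpha)$ and $\mathcal L_K=\iota_K\mathrm d-(-1)^{k-1}\mathrm d\iota_K$. For an almost complex structure $J$ ($J^2=-I$), $\mathcal L_J$ has degree $1$ and $\mathrm d\mathcal L_J=-\mathcal L_J\mathrm d$, so $\mathrm d$ preserves $(\ker\mathcal L_J)^k=\{\alpha\in\Omega^k(M):\mathcal L_J\alpha=0\}$; $H^k_J(M)$ is the $k$-th cohomology of $((\ker\mathcal L_J)^\bullet,\mathrm d)$ and $\phi^k$ is induced by the inclusion into $\Omega^\bullet(M)$. Notation (real forms): $(\operatorname{im}\mathcal L_J)^k=\mathcal L_J(\Omega^{k-1}(M))$, $(\operatorname{im}\mathrm d\mathcal L_J)^k=\mathrm d\mathcal L_J(\Omega^{k-2}(M))$, $(\ker\mathrm d)^k$ the closed $k$-forms. *)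

(* Abstract algebraic model of the (real) de Rham complex of an
   almost complex manifold together with the contraction iota_J. *)
From HB Require Import structures.
From mathcomp Require Import all_boot all_order all_algebra.
Set Implicit Arguments. Unset Strict Implicit. Unset Printing Implicit Defensive.
Import GRing.Theory.
Local Open Scope ring_scope.

Section DLJ.
Variables (R : nzRingType) (Om : nat -> lmodType R)
  (d : forall k, {linear Om k -> Om k.+1})
  (iJ : forall k, {linear Om k -> Om k}).

(* L_J = iota_J d - (-1)^(1-1) d iota_J  (J is a vector-valued 1-form) *)
Definition LJ k (x : Om k) : Om k.+1 := iJ k.+1 (d k x) - d k (iJ k x).

Definition kerLJ k (x : Om k) : Prop := LJ x = 0.
Definition closedf k (x : Om k) : Prop := d k x = 0.

(* exact in Omega^k(M) (Omega^{-1} = 0) *)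
Definition exactf k : Om k -> Prop :=
  match k return Om k -> Prop with
  | 0 => fun x => x = 0
  | j.+1 => fun x => exists y : Om j, d j y = x
  end.

(* exact in the subcomplex ((ker L_J)^., d) *)
Definition exactJ k : Om k -> Prop :=
  match k return Om k -> Prop with
  | 0 => fun x => x = 0
  | j.+1 => fun x => exists y : Om j, kerLJ y /\ d j y = x
  end.

(* phi^k : H^k_J -> H^k_dR,  [a]_J |-> [a]_dR, is injective *)
Definition phi_injective k : Prop :=
  forall a b : Om k, kerLJ a -> closedf a -> kerLJ b -> closedf b ->
    exactf (a - b) -> exactJ (a - b).

Definition phi_surjective k : Prop :=
  forall a : Om k, closedf a ->
    exists b : Om k, [/\ kerLJ b, closedf b & exactf (a - b)].

(* phi^(k-1) surjective; H^{-1} = 0 so trivially true for k = 0 *)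
Definition phi_prev_surjective k : Prop :=
  match k with 0 => True | j.+1 => phi_surjective j end.

Definition imLJ k : Om k -> Prop :=
  match k return Om k -> Prop with
  | 0 => fun x => x = 0
  | j.+1 => fun x => exists y : Om j, LJ y = x
  end.

Definition imdLJ k : Om k -> Prop :=
  match k return Om k -> Prop with
  | 0 => fun x => x = 0
  | 1 => fun x => x = 0
  | j.+2 => fun x => exists y : Om j, d j.+1 (LJ y) = x
  end.

Definition dLJ_lemma k : Prop :=
  forall x : Om k, (imLJ x /\ closedf x) <-> imdLJ x.

End DLJ.

(* Everything rests on [L_J d = - d L_J].  If the d L_J-lemma holds, a form
   [y] with [L_J y] closed can be corrected by an exact form into [ker L_J];
   this gives injectivity of [phi^k] (take [a - b = d y]) and surjectivity of
   [phi^(k-1)].  Conversely, for [x = L_J y] closed, [d y] is a closed form of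
   [ker L_J] that is exact in [Omega], so injectivity gives [d y = d y'] with
   [L_J y' = 0]; surjectivity writes the closed form [y - y'] as [b + t] with
   [L_J b = 0] and [t] exact, and then [x = L_J t] lies in [im d L_J]. *)
From Pilot Require Import Defs.
From HB Require Import structures.
From mathcomp Require Import all_boot all_order all_algebra.
Set Implicit Arguments. Unset Strict Implicit. Unset Printing Implicit Defensive.
Import GRing.Theory.
Local Open Scope ring_scope.

Section DLJLemma.
Variables (R : nzRingType) (Om : nat -> lmodType R)
  (d : forall k, {linear Om k -> Om k.+1})
  (iJ : forall k, {linear Om k -> Om k}).

Local Notation LJ := (LJ d iJ).

Lemma LJB k : zmod_morphism (@LJ k).
Proof. by move=> x y; rewrite /Defs.LJ !raddfB /= addrACA. Qed.

HB.instance Definition _ k :=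
  GRing.isZmodMorphism.Build (Om k) (Om k.+1) (@LJ k) (@LJB k).

Hypothesis dd : forall k (x : Om k), d k.+1 (d k x) = 0.

Lemma LJ_d k (x : Om k) : LJ (d k x) = - d k.+1 (LJ x).
Proof. by rewrite /Defs.LJ dd raddf0 sub0r raddfB /= dd subr0. Qed.

Lemma closedf_LJ k (x : Om k) : closedf d x -> closedf d (LJ x).
Proof. by move=> Cx; apply/eqP; rewrite -oppr_eq0 -LJ_d Cx raddf0. Qed.

Lemma exactf_closedf k (x : Om k) : exactf d x -> closedf d x.
Proof. by case: k x => [|k] x /= => [->|[y <-]]; rewrite /closedf ?raddf0 ?dd. Qed.

Lemma imdLJ_LJ_exactf j (x : Om j.+1) :
  imdLJ d iJ x <-> exists2 t : Om j, exactf d t & LJ t = x.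
Proof.
case: j x => [|j] x /=; split.
- by move->; exists 0; rewrite ?raddf0.
- by case=> t -> <-; rewrite raddf0.
- by case=> y <-; exists (d j (- y)); [exists (- y) | rewrite LJ_d !raddfN opprK].
- by case=> t [y <-] <-; exists (- y); rewrite LJ_d !raddfN.
Qed.

Lemma imdLJ_imLJ_closedf k (x : Om k) : imdLJ d iJ x -> imLJ d iJ x /\ closedf d x.
Proof.
case: k x => [|j] x; first by move=> /= ->; rewrite /closedf raddf0.
case/imdLJ_LJ_exactf=> t /exactf_closedf Ct <-.
by split; [exists t | apply: closedf_LJ].
Qed.

Lemma dLJ_lemma_ker_correction j : dLJ_lemma d iJ j.+1 ->
  forall y : Om j, closedf d (LJ y) -> exists2 t, exactf d t & kerLJ d iJ (y - t).
Proof.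
move=> dLJ y CLy; have /imdLJ_LJ_exactf[t Et LJt] : imdLJ d iJ (LJ y).
  by apply/dLJ; split; first exists y.
by exists t; rewrite // /kerLJ LJB LJt subrr.
Qed.

Lemma dLJ_lemma_phi_injective k : dLJ_lemma d iJ k -> phi_injective d iJ k.
Proof.
case: k => [|j] dLJ a b Ka Ca Kb Cb //= [y dy].
have CLy : closedf d (LJ y).
  by apply/eqP; rewrite -oppr_eq0 -LJ_d dy LJB Ka Kb subrr.
have [t Et Kyt] := dLJ_lemma_ker_correction dLJ CLy.
by exists (y - t); split; rewrite // raddfB /= dy (exactf_closedf Et) subr0.
Qed.

Lemma dLJ_lemma_phi_prev_surjective k :
  dLJ_lemma d iJ k -> phi_prev_surjective d iJ k.
Proof.
case: k => [|j] //= dLJ a Ca.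
have [t Et Kat] := dLJ_lemma_ker_correction dLJ (closedf_LJ Ca).
exists (a - t); split => //; last by rewrite opprB addrC subrK.
by rewrite /closedf raddfB /= Ca (exactf_closedf Et) subrr.
Qed.

Lemma phi_dLJ_lemma k : phi_injective d iJ k -> phi_prev_surjective d iJ k ->
  dLJ_lemma d iJ k.
Proof.
case: k => [|j] inj surj x; split; try exact: imdLJ_imLJ_closedf.
  by case.
case=> -[y LJy] Cx; apply/imdLJ_LJ_exactf.
have [y' [Ky' dy']] : exactJ d iJ (d j y - 0).
  apply: inj; rewrite /kerLJ /closedf ?raddf0 ?dd //.
  - by rewrite LJ_d LJy Cx oppr0.
  - by exists y; rewrite addr0.
have [|b [Kb _ Et]] := surj (y - y').
  by rewrite /closedf raddfB /= dy' subr0 subrr.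
by exists (y - y' - b); last by rewrite !LJB Ky' Kb !subr0 LJy.
Qed.

End DLJLemma.

Theorem theorem3p18 (R : nzRingType) (Om : nat -> lmodType R)
  (d : forall k, {linear Om k -> Om k.+1})
  (iJ : forall k, {linear Om k -> Om k})
  (dd : forall k (x : Om k), d k.+1 (d k x) = 0%R)
  (k : nat) :
  dLJ_lemma d iJ k <->
  (phi_injective d iJ k /\ phi_prev_surjective d iJ k).
Proof.
split; last by case; apply: phi_dLJ_lemma.
move=> dLJ; split.
  exact: dLJ_lemma_phi_injective.
exact: dLJ_lemma_phi_prev_surjective.
Qed.
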